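(* Let $L$ be a friendly labeling function, $T$ a tree with root edge, and $v$ an interior vertex of $T$ with incident edges $e_1,\dots,e_c$. Let $$g=\prod_{i=1}^d q_{(l_i^1,\dots,l_i^c)}-\prod_{i=1}^d q_{(m_i^1,\dots,m_i^c)}\in I_{T_v,L}.$$ For each $i=1,\dots,d$ and $j=1,\dots,c$ choose $L_i^j\in{\rm im}(L^{T_{v,e_j}},l_i^j)$ and $M_i^j\in{\rm im}(L^{T_{v,e_j}},m_i^j)$ such that for each $j$ the multisets $\{L_1^j,\dots,L_d^j\}$ and $\{M_1^j,\dots,M_d^j\}$ coincide. Then each $(L_i^1,\dots,L_i^c)$ and $(M_i^1,\dots,M_i^c)$ is a consistent labeling of $T$, and $$g^*=\prod_{i=1}^d q_{(L_i^1,\dots,L_i^c)}-\prod_{i=1}^d q_{(M_i^1,\dots,M_i^c)}$$ lies in $I_{T,L}$.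
   Context: Let $G$ be a finite abelian group written additively, $\mathcal{L}$ a finite set, $L:G\to\mathcal{L}$ a function. A tree with root edge is a finite tree $T$ with a distinguished leaf $\rho$; the edge at $\rho$ is the root edge. Every vertex $v\neq\rho$ has a unique parent edge (first edge on the path from $v$ to $\rho$); other edges at $v$ are child edges. Vertices that are neither $\rho$ nor leaves are interior vertices. $E(T)$ is the edge set. An edge $e'$ is below $e$ if $e$ lies on the path from $\rho$ to $e'$ (so $e$ is below itself). A map $h:E(T)\to G$ is a consistent assignment if for every interior vertex $u$, $h(\text{parent edge of }u)=\sum h(\text{child edges of }u)$. ${\rm im}(L^T)=\{L\circ h: h\text{ consistent}\}$ is the set of consistent labelings. $I_{T,L}$ is the kernel of $\mathbb{C}[q_\lambda:\lambda\in{\rm im}(L^T)]\to\mathbb{C}[a^{(e)}_l:e\in E(T),l\in\mathcal{L}]$, $q_\lambda\mapsto\prod_{e\in E(T)}a^{(e)}_{\lambda(e)}$; the same definitions apply to any tree with root edge. For an edge $e$, $T_{e,-}$ is the tree formed by all edges below $e$, regarded as a tree with root edge $e$ (distinguished leaf = endpoint of $e$ closer to $\rho$); $T_{e,+}$ is the tree formed by $e$ and all edges not below $e$, with the same $\rho$ (the endpoint of $e$ farther from $\rho$ becomes a leaf). For an interior vertex $v$ with incident edges $e_1,\dots,e_c$: $T_v$ is the claw tree consisting of $e_1,\dots,e_c$, regarded as a tree with root edge the parent edge of $v$; $T_{v,e_j}=T_{e_j,+}$ if $e_j$ is the parent edge of $v$ and $T_{v,e_j}=T_{e_j,-}$ otherwise.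 The edge sets of $T_{v,e_1},\dots,T_{v,e_c}$ partition $E(T)$, and $(L^1,\dots,L^c)$ denotes the labeling of $T$ whose restriction to $T_{v,e_j}$ is $L^j$. ${\rm im}(L^{T_{v,e_j}},l)$ is the set of consistent labelings of $T_{v,e_j}$ taking the value $l$ on $e_j$. Labelings of $T_v$ are written $(l^1,\dots,l^c)$ with $l^j$ the value on $e_j$. Friendliness: for $m\ge3$ let $Z_m=\{(g_1,\dots,g_m)\in G^m: g_1+\cdots+g_{m-1}=g_m\}$ and $\widetilde{L}(g_1,\dots,g_m)=(L(g_1),\dots,L(g_m))$; $L$ is $m$-friendly if for every $l\in\widetilde{L}(Z_m)$ and every $i$, the set of $i$-th coordinates of elements of $\widetilde{L}^{-1}(l)$ equals $L^{-1}(l_i)$; $L$ is friendly if it is $m$-friendly for all $m\ge3$. *)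

From HB Require Import structures.
From mathcomp Require Import all_boot all_order all_algebra all_field.
From mathcomp Require Import mpoly.
Set Implicit Arguments. Unset Strict Implicit. Unset Printing Implicit Defensive.
Import GRing.Theory.
Local Open Scope ring_scope.

(* A tree with root edge, encoded by its edge set and the parent-edge map:
   [tpar e = Some e'] iff e' is the parent edge of the lower endpoint of e
   (i.e. e is a child edge of that vertex); [tpar e = None] iff e is the
   root edge.  Vertices other than the distinguished leaf rho correspond
   bijectively to edges (a vertex <-> its parent edge). *)
Record rtree := RTree { tedge : finType; tpar : tedge -> option tedge }.
Arguments tpar : clear implicits.

Definition is_rtree (T : rtree) : Prop :=
  #|[set e | tpar T e == None]| = 1%N /\
  forall e : tedge T, exists n, iter n (obind (tpar T)) (Some e) = None.

Definition childb (T : rtree) (e f : tedge T) : bool := tpar T f == Some e.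

(* the lower endpoint of e is an interior vertex (it has child edges) *)
Definition interiorb (T : rtree) (e : tedge T) : bool := [exists f, childb e f].

Definition belowb (T : rtree) (e f : tedge T) : bool :=
  [exists n : 'I_#|tedge T|.+1, iter n (obind (tpar T)) (Some f) == Some e].

Definition consistentb (G : zmodType) (T : rtree) (h : {ffun tedge T -> G}) :=
  [forall e, interiorb e ==> (h e == \sum_(f | childb e f) h f)].

Definition imL (G : finZmodType) (Lab : finType) (L : G -> Lab) (T : rtree)
  : {set {ffun tedge T -> Lab}} :=
  [set lam | [exists h : {ffun tedge T -> G},
                consistentb h && (lam == [ffun e => L (h e)])]].

Definition imT (G : finZmodType) (Lab : finType) (L : G -> Lab) (T : rtree) :=
  {lam : {ffun tedge T -> Lab} | lam \in imL L T}.

(* Polynomial rings C[q_lam : lam in im(L^T)] and C[a^(e)_l], with the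
   complex numbers modelled by algC. *)
Definition qring (G : finZmodType) (Lab : finType) (L : G -> Lab) (T : rtree) :=
  {mpoly algC[#|{: imT L T}|]}.
Definition aring (Lab : finType) (T : rtree) :=
  {mpoly algC[#|{: tedge T * Lab}|]}.

Definition qvar (G : finZmodType) (Lab : finType) (L : G -> Lab) (T : rtree)
  (lam : imT L T) : qring L T := 'X_(enum_rank lam).

Definition avar (Lab : finType) (T : rtree) (e : tedge T) (l : Lab) : aring Lab T :=
  'X_(enum_rank (e, l)).

(* the ring map q_lam |-> prod_e a^(e)_{lam(e)} *)
Definition phiT (G : finZmodType) (Lab : finType) (L : G -> Lab) (T : rtree)
  (p : qring L T) : aring Lab T :=
  comp_mpoly [tuple \prod_(e : tedge T) avar e (val (enum_val i) e)
             | i < #|{: imT L T}|] p.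

Definition idealTL (G : finZmodType) (Lab : finType) (L : G -> Lab) (T : rtree)
  : pred (qring L T) := [pred p | phiT p == 0].

Definition subtree (T : rtree) (S : {set tedge T}) : rtree :=
  @RTree {e : tedge T | e \in S}
    (fun x => obind (fun p => insub p) (tpar T (val x))).

Definition Tminus (T : rtree) (e : tedge T) : rtree :=
  subtree [set f | belowb e f].
Definition Tplus (T : rtree) (e : tedge T) : rtree :=
  subtree [set f | (f == e) || ~~ belowb e f].

(* For the interior vertex v whose parent edge is p:
   T_v is the claw of edges incident to v (p and its child edges). *)
Definition Tv (T : rtree) (p : tedge T) : rtree :=
  subtree (p |: [set f | childb p f]).

Definition Svf (T : rtree) (p : tedge T) (f : tedge (Tv p)) : {set tedge T} :=
  if val f == p then [set g | (g == p) || ~~ belowb p g]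
  else [set g | belowb (val f) g].
Definition Tvf (T : rtree) (p : tedge T) (f : tedge (Tv p)) : rtree :=
  subtree (Svf f).

(* Friendliness.  For m = m'.+1, Z_m = {g in G^m | g_1+...+g_{m-1} = g_m}. *)
Definition Zm (G : finZmodType) (m' : nat) : {set {ffun 'I_m'.+1 -> G}} :=
  [set g : {ffun 'I_m'.+1 -> G} | \sum_(i < m'.+1 | i != ord_max) g i == g ord_max].

Definition Ltil (G : finZmodType) (Lab : finType) (L : G -> Lab) (m' : nat)
  (g : {ffun 'I_m'.+1 -> G}) : {ffun 'I_m'.+1 -> Lab} := [ffun i => L (g i)].

Definition mfriendly (G : finZmodType) (Lab : finType) (L : G -> Lab) (m' : nat) : Prop :=
  forall l, l \in @Ltil G Lab L m' @: Zm G m' ->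
  forall i : 'I_m'.+1,
    (fun g : {ffun 'I_m'.+1 -> G} => g i) @: [set g in Zm G m' | Ltil L g == l] = [set x | L x == l i].

(* friendly: m-friendly for all m >= 3, i.e. m' >= 2 *)
Definition friendly (G : finZmodType) (Lab : finType) (L : G -> Lab) : Prop :=
  forall m', (2 <= m')%N -> mfriendly L m'.

Arguments idealTL {G Lab} L T.
Arguments phiT {G Lab} L T p.

(* Every labeling in im(L^{T_{v,e_j}}) comes from a consistent assignment of
   its branch, and l_i from a consistent assignment k of the claw T_v.  At the
   edges e_j the branch values have the same labels as k, but need not satisfy
   the sum condition at v.  Friendliness, applied to k at v, yields new values
   on the child edges of v with the same labels summing to the value on the
   parent edge; applied recursively at each interior vertex below, it
   propagates such a change down a branch without altering any label.  The
   adjusted branches glue to a consistent assignment of T, so (L_i^1,...,L_i^c)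
   is a consistent labeling.  Finally, for each edge e the two monomials of g^*
   are sent to products of a^(e)-variables over the same multiset of labels,
   so g^* lies in the kernel of phi. *)

From HB Require Import structures.
From mathcomp Require Import all_boot all_order all_algebra all_field.
From mathcomp Require Import mpoly.
Import GRing.Theory.

Set Implicit Arguments. Unset Strict Implicit. Unset Printing Implicit Defensive.
Local Open Scope ring_scope.

Section RootedTree.
Variable T : rtree.
Hypothesis T_wf : is_rtree T.
Local Notation E := (tedge T).
Implicit Types (b c e f x y : E).

Definition up n e := iter n (obind (tpar T)) (Some e).

Lemma iter_obind_None n : iter n (obind (tpar T)) None = None.
Proof. by elim: n => //= n ->. Qed.

Lemma upD n m e : up (n + m) e = iter n (obind (tpar T)) (up m e).
Proof. by rewrite /up iterD. Qed.

Lemma up_None_mono n m e : up n e = None -> (n <= m)%N -> up m e = None.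
Proof. by move=> hn /subnK <-; rewrite upD hn iter_obind_None. Qed.

Lemma up_cycle_free n e : (0 < n)%N -> up n e <> Some e.
Proof.
move=> n_gt0 cyc.
have upMn k : up (k * n) e = Some e by elim: k => // k IH; rewrite mulSn upD IH.
have [N upN] := T_wf.2 e.
by have := upMn N; rewrite (up_None_mono upN) // leq_pmulr.
Qed.

Lemma up_inj e i j y : up i e = Some y -> up j e = Some y -> i = j.
Proof.
have no_repeat k l : (k < l)%N -> up k e = Some y -> up l e <> Some y.
  move=> lt_kl upk; rewrite -(subnK (ltnW lt_kl)) upD upk.
  by apply: up_cycle_free; rewrite subn_gt0.
move=> upi upj; case: (ltngtP i j) => // [lt_ij|lt_ji].
  by case: (no_repeat _ _ lt_ij upi).
by case: (no_repeat _ _ lt_ji upj).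
Qed.

Lemma up_bound n e x : up n e = Some x -> (n < #|E|)%N.
Proof.
move=> upn.
have up_some (i : 'I_n.+1) : up i e = Some (odflt e (up i e)).
  case upi: (up i e) => //.
  by rewrite (up_None_mono upi (ltn_ord i : (i <= n)%N)) in upn.
have inj : injective (fun i : 'I_n.+1 => odflt e (up i e)).
  by move=> i j eq_ij; apply/val_inj/(up_inj (up_some i)); rewrite eq_ij -up_some.
by have := leq_card _ inj; rewrite card_ord.
Qed.

Lemma belowP e f : reflect (exists n, up n f = Some e) (belowb e f).
Proof.
apply: (iffP existsP) => [[n /eqP]|[n upn]]; first by exists n.
have lt_n : (n < #|E|.+1)%N by rewrite ltnS ltnW // (up_bound upn).
by exists (Ordinal lt_n); apply/eqP.
Qed.

Lemma below_refl e : belowb e e.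
Proof. by apply/belowP; exists 0%N. Qed.

Lemma below_trans x y z : belowb x y -> belowb y z -> belowb x z.
Proof.
by move=> /belowP[n upn] /belowP[m upm]; apply/belowP; exists (n + m)%N; rewrite upD upm.
Qed.

Lemma child_below e f : childb e f -> belowb e f.
Proof. by move=> /eqP par_f; apply/belowP; exists 1%N; rewrite /up /= par_f. Qed.

Lemma child_not_below x b : childb x b -> ~~ belowb b x.
Proof.
move=> /eqP par_b; apply/negP => /belowP[n upn].
by apply: (@up_cycle_free n.+1 x) => //; rewrite /up iterS -/(up n x) upn /= par_b.
Qed.

Lemma child_neq x b : childb x b -> b != x.
Proof. by move=> /child_not_below; apply: contraNneq => ->; apply: below_refl. Qed.

Lemma below_parent x e f : childb e f -> belowb x f -> f != x -> belowb x e.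
Proof.
move=> /eqP par_f /belowP[[|n] upn] neq_fx; first by case: upn neq_fx => ->; rewrite eqxx.
by apply/belowP; exists n; rewrite -upn -addn1 upD /up /= par_f.
Qed.

Lemma below_split x e : belowb x e -> e != x -> exists2 b, childb x b & belowb b e.
Proof.
move=> /belowP[[|n] upn] neq_ex; first by case: upn neq_ex => ->; rewrite eqxx.
move: upn; rewrite /up iterS -/(up n e); case upn: (up n e) => [b|] //= par_b.
by exists b; [apply/eqP | apply/belowP; exists n].
Qed.

Lemma below_child_uniq x b b' e :
  childb x b -> childb x b' -> belowb b e -> belowb b' e -> b = b'.
Proof.
move=> /eqP par_b /eqP par_b' /belowP[n upn] /belowP[n' upn'].
have upSn : up n.+1 e = Some x by rewrite /up iterS -/(up n e) upn.
have upSn' : up n'.+1 e = Some x by rewrite /up iterS -/(up n' e) upn'.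
by case: (up_inj upSn upSn') upn' => <-; rewrite upn => -[].
Qed.

Lemma below_leaf x e : ~~ interiorb x -> belowb x e -> e = x.
Proof.
move=> leaf_x xe; apply/eqP; apply: contraNT leaf_x => /(below_split xe)[b xb _].
by apply/existsP; exists b.
Qed.

Lemma proper_below_child x b :
  childb x b -> [set e | belowb b e] \proper [set e | belowb x e].
Proof.
move=> xb; apply/properP; split.
  by apply/subsetP => e; rewrite !inE => be; exact: (below_trans (child_below xb) be).
by exists x; rewrite !inE ?below_refl // (negPf (child_not_below xb)).
Qed.

End RootedTree.

Lemma big_ord_neq_max (R : Type) (idx : R) (op : Monoid.law idx) n (F : 'I_n.+1 -> R) :
  \big[op/idx]_(i < n.+1 | i != ord_max) F i
  = \big[op/idx]_(i < n) F (widen_ord (leqnSn n) i).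
Proof.
rewrite big_mkcond big_ord_recr /= eqxx Monoid.mulm1; apply: eq_bigr => i _.
by rewrite ifT // -val_eqE /= neq_ltn ltn_ord.
Qed.

Section Friendly.
Variables (G : finZmodType) (Lab : finType) (L : G -> Lab).
Hypothesis L_friendly : friendly L.

Lemma friendly_sum_ord n (w : 'I_n -> G) g : (0 < n)%N -> L g = L (\sum_i w i) ->
  exists2 w' : 'I_n -> G, forall i, L (w' i) = L (w i) & \sum_i w' i = g.
Proof.
case: n w => // -[|n] w _ Lg.
  exists (fun=> g) => [i|]; last by rewrite big_ord1.
  by rewrite (ord1 i) Lg big_ord1.
pose v : {ffun 'I_n.+3 -> G} :=
  [ffun i => if unlift ord_max i is Some j then w j else \sum_j w j].
have v_max : v ord_max = \sum_j w j by rewrite ffunE unlift_none.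
have v_widen j : v (widen_ord (leqnSn _) j) = w j.
  have -> : widen_ord (leqnSn _) j = lift ord_max j.
    by apply/val_inj; rewrite /= /bump leqNgt ltn_ord.
  by rewrite ffunE liftK.
clearbody v.
have vZ : v \in Zm G n.+2.
  by rewrite inE big_ord_neq_max v_max; under eq_bigr do rewrite v_widen.
have := L_friendly (isT : (2 <= n.+2)%N) (imset_f (@Ltil G Lab L n.+2) vZ) ord_max.
move=> /setP /(_ g); rewrite !inE ffunE v_max -Lg eqxx.
case/imsetP => u; rewrite inE => /andP[uZ /eqP Lu] ->.
exists (fun j => u (widen_ord (leqnSn _) j)) => [j|].
  by have /ffunP/(_ (widen_ord (leqnSn _) j)) := Lu; rewrite !ffunE v_widen.
by move: uZ; rewrite inE big_ord_neq_max => /eqP.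
Qed.

Lemma friendly_sum (I : finType) (P : {pred I}) (a : I -> G) g :
  (0 < #|P|)%N -> L g = L (\sum_(i in P) a i) ->
  exists2 a' : I -> G, {in P, forall i, L (a' i) = L (a i)} & \sum_(i in P) a' i = g.
Proof.
move=> P_gt0; have [i0 Pi0] := card_gt0P P_gt0; rewrite big_enum_val => Lg.
have [w' Lw' sumw'] := friendly_sum_ord P_gt0 Lg.
exists (fun i => w' (enum_rank_in Pi0 i)) => [i Pi|].
  by rewrite Lw' enum_rankK_in.
by rewrite big_enum_val -sumw'; apply: eq_bigr => i _; rewrite enum_valK_in.
Qed.

End Friendly.

Section Graft.
Variables (G : zmodType) (T : rtree).
Hypothesis T_wf : is_rtree T.
Local Notation E := (tedge T).
Implicit Types (b c e f x : E) (h : E -> G).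

Definition consistent_below x h :=
  forall e, belowb x e -> interiorb e -> h e = \sum_(f | childb e f) h f.

Definition consistent_outside x h :=
  forall e, ~~ belowb x e -> interiorb e -> h e = \sum_(f | childb e f) h f.

Lemma consistent_below_leaf x h : ~~ interiorb x -> consistent_below x h.
Proof. by move=> leaf_x e /(below_leaf T_wf leaf_x) ->; rewrite (negPf leaf_x). Qed.

Definition graft x g (H : E -> E -> G) h e : G :=
  if e == x then g
  else if [pick b | childb x b && belowb b e] is Some b then H b e else h e.

Lemma pick_child x b e : childb x b -> belowb b e ->
  [pick b' | childb x b' && belowb b' e] = Some b.
Proof.
move=> xb be; case: pickP => [b' /andP[xb' b'e]|/(_ b)]; last by rewrite xb be.
by rewrite (below_child_uniq T_wf xb' xb b'e be).
Qed.

Lemma graft_root x g H h : graft x g H h x = g.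
Proof. by rewrite /graft eqxx. Qed.

Lemma graft_child x g H h b e : childb x b -> belowb b e -> graft x g H h e = H b e.
Proof.
move=> xb be; rewrite /graft (pick_child xb be); case: eqP => // ex.
by move: (child_not_below T_wf xb); rewrite -ex be.
Qed.

Lemma graft_out x g H h e : ~~ belowb x e -> graft x g H h e = h e.
Proof.
move=> xe; rewrite /graft; case: eqP => [ex|_]; first by rewrite ex below_refl in xe.
case: pickP => // b /andP[xb be].
by rewrite (below_trans T_wf (child_below T_wf xb) be) in xe.
Qed.

Lemma graft_id_out x H h e : (e == x) || ~~ belowb x e -> graft x (h x) H h e = h e.
Proof. by case/orP => [/eqP->|/graft_out->//]; rewrite graft_root. Qed.

Lemma consistent_below_graft x g H h :
  (forall b, childb x b -> consistent_below b (H b)) ->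
  g = \sum_(b | childb x b) H b b -> consistent_below x (graft x g H h).
Proof.
move=> cons_H sumH e xe int_e; case: (eqVneq e x) => [->|ex].
  rewrite graft_root sumH; apply: eq_bigr => b xb.
  by rewrite (graft_child _ _ _ xb (below_refl T_wf b)).
have [b xb be] := below_split T_wf xe ex.
rewrite (graft_child _ _ _ xb be) (cons_H b xb e be int_e); apply: eq_bigr => f ef.
by rewrite (graft_child _ _ _ xb (below_trans T_wf be (child_below T_wf ef))).
Qed.

Lemma consistent_graft x H h :
  consistent_outside x h -> (forall b, childb x b -> consistent_below b (H b)) ->
  h x = \sum_(b | childb x b) H b b -> consistentb [ffun e => graft x (h x) H h e].
Proof.
move=> cons_out cons_H sumH; apply/forallP => e; apply/implyP => int_e.
rewrite ffunE; under eq_bigr do rewrite ffunE; apply/eqP.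
have [xe|not_xe] := boolP (belowb x e); first exact: consistent_below_graft.
rewrite graft_out // cons_out //; apply: eq_bigr => f ef; rewrite graft_id_out //.
case: eqP => //= /eqP fx; apply: contraNN not_xe => xf.
exact: (below_parent T_wf ef xf fx).
Qed.

End Graft.

Section Relabel.
Variables (G : finZmodType) (Lab : finType) (L : G -> Lab).
Hypothesis L_friendly : friendly L.
Variable T : rtree.
Hypothesis T_wf : is_rtree T.
Local Notation E := (tedge T).
Implicit Types (b c e f x : E) (h : E -> G).

Lemma relabel_below x h g : consistent_below x h -> L g = L (h x) ->
  exists h', [/\ consistent_below x h', forall e, belowb x e -> L (h' e) = L (h e)
               & h' x = g].
Proof.
have [n] := ubnP #|[set e | belowb x e]|; elim: n => // n IH in x h g *.
rewrite ltnS => size_x cons_x Lg.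
have [int_x|leaf_x] := boolP (interiorb x); last first.
  exists (fun=> g); split=> // [|e /(below_leaf T_wf leaf_x) ->//].
  exact: consistent_below_leaf.
have x_gt0 : (0 < #|childb x|)%N by case/existsP: int_x => b xb; apply/card_gt0P; exists b.
have Lg_sum : L g = L (\sum_(b | childb x b) h b) by rewrite -cons_x // below_refl.
have [a La sum_a] := friendly_sum L_friendly x_gt0 Lg_sum.
have child_relabel b : exists Hb, childb x b ->
    [/\ consistent_below b Hb, forall e, belowb b e -> L (Hb e) = L (h e) & Hb b = a b].
  have [xb|] := boolP (childb x b); last by exists h.
  have size_b := leq_trans (proper_card (proper_below_child T_wf xb)) size_x.
  have cons_b : consistent_below b h.
    by move=> e be; apply: cons_x; exact: (below_trans T_wf (child_below T_wf xb) be).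
  by have [Hb] := IH b h (a b) size_b cons_b (La b xb); exists Hb.
have [H HP] := fin_all_exists child_relabel.
exists (graft x g H h); split.
- apply: (consistent_below_graft T_wf) => [b /HP[]//|]; rewrite -sum_a.
  by apply: eq_bigr => b /HP[].
- move=> e xe; case: (eqVneq e x) => [->|ex]; first by rewrite graft_root Lg.
  have [b xb be] := below_split T_wf xe ex.
  by have [_ Lb _] := HP b xb; rewrite (graft_child T_wf _ _ _ xb be) Lb.
- exact: graft_root.
Qed.

End Relabel.

Section Labelings.
Variables (G : finZmodType) (Lab : finType) (L : G -> Lab).

Lemma imT_assignment (T : rtree) (lam : imT L T) :
  exists2 h : {ffun tedge T -> G}, consistentb h & forall e, val lam e = L (h e).
Proof.
have := valP lam; rewrite inE => /existsP[h /andP[cons_h /eqP->]].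
by exists h => // e; rewrite ffunE.
Qed.

Lemma assignment_imL (T : rtree) (h : {ffun tedge T -> G}) :
  consistentb h -> [ffun e => L (h e)] \in imL L T.
Proof. by move=> cons_h; rewrite inE; apply/existsP; exists h; rewrite cons_h eqxx. Qed.

Variable T : rtree.
Local Notation E := (tedge T).

Lemma childb_sub (S : {set E}) (x y : tedge (subtree S)) :
  childb x y = childb (val x) (val y).
Proof.
rewrite /childb /=; case: (tpar T (val y)) => [z|] //=.
case: insubP => [u _ <-|not_Sz] /=; first by apply/eqP/eqP => [[->]|[/val_inj->]].
by apply/esym/eqP => -[zx]; move: not_Sz; rewrite zx (valP x).
Qed.

Lemma subtree_assignment (S : {set E}) (lam : imT L (subtree S)) :
  exists2 h : E -> G, forall x : tedge (subtree S), L (h (val x)) = val lam x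
    & forall e, e \in S -> (forall f, childb e f -> f \in S) -> interiorb e ->
      h e = \sum_(f | childb e f) h f.
Proof.
have [hs cons_hs lam_hs] := imT_assignment lam.
exists (fun e => if insub e is Some y then hs y else 0) => [x|e Se S_ch int_e].
  by rewrite valK lam_hs.
pose y : tedge (subtree S) := Sub e Se.
have int_y : interiorb y.
  case/existsP: int_e => f ef; apply/existsP; exists (Sub f (S_ch f ef)).
  by rewrite childb_sub.
have /implyP/(_ int_y)/eqP hy := forallP cons_hs y.
rewrite insubT -/y hy (eq_bigl (fun f => (f \in S) && childb e f)); last first.
  by move=> f; case ef: (childb e f); rewrite ?andbF ?S_ch.
rewrite big_sub_cond; apply: eq_big => [z|z _]; first by rewrite childb_sub.
by rewrite valK.
Qed.

End Labelings.

Section Claw.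
Variables (G : finZmodType) (Lab : finType) (L : G -> Lab).
Variable T : rtree.
Hypothesis T_wf : is_rtree T.
Local Notation E := (tedge T).
Variable p : E.
Implicit Types (c e : E) (f : tedge (Tv p)) (h : E -> G).

Definition claw_root : tedge (Tv p) := Sub p (setU11 _ _).

(* junk value [claw_root] unless [c] is a child edge of [p] *)
Definition branch c : tedge (Tv p) := insubd claw_root c.


Lemma mem_Tv f : val f = p \/ childb p (val f).
Proof. by have := valP f; rewrite !inE => /orP[/eqP|]; [left|right]. Qed.

Lemma val_branch c : childb p c -> val (branch c) = c.
Proof. by move=> pc; rewrite insubdK // !inE pc orbT. Qed.

Lemma branch_val f : val f != p -> branch (val f) = f.
Proof.
by move=> fp; apply: val_inj; case: (mem_Tv f) (fp) => [->|/val_branch]; rewrite ?eqxx.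
Qed.

Lemma Svf_root f : val f = p -> Svf f = [set e | (e == p) || ~~ belowb p e].
Proof. by rewrite /Svf => ->; rewrite eqxx. Qed.

Lemma Svf_child f : val f != p -> Svf f = [set e | belowb (val f) e].
Proof. by rewrite /Svf => /negPf->. Qed.

Lemma mem_Svf_self f : val f \in Svf f.
Proof.
have [fp|fp] := eqVneq (val f) p; first by rewrite Svf_root // inE fp eqxx.
by rewrite Svf_child // inE below_refl.
Qed.

Lemma Svf_cover e : exists f, e \in Svf f.
Proof.
have [pe|not_pe] := boolP (belowb p e); last first.
  by exists claw_root; rewrite Svf_root // inE not_pe orbT.
have [ep|/(below_split T_wf pe)[c pc ce]] := eqVneq e p.
  by exists claw_root; rewrite Svf_root // inE ep eqxx.
by exists (branch c); rewrite Svf_child val_branch ?inE ?(child_neq T_wf pc).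
Qed.

Definition branch_consistent f h :=
  if val f == p then consistent_outside p h else consistent_below (val f) h.

Lemma branch_assignment f (lam : imT L (Tvf f)) :
  exists h, (forall x, L (h (val x)) = val lam x) /\ branch_consistent f h.
Proof.
have [h h_lab h_cons] := subtree_assignment lam; exists h; split=> //.
rewrite /branch_consistent; have [fp|fp] := eqVneq (val f) p => e.
  move=> not_pe; apply: h_cons; first by rewrite Svf_root // inE not_pe orbT.
  move=> e' ee'; rewrite Svf_root // inE; have [//|e'p] := eqVneq e' p.
  by apply: contraNN not_pe => pe'; exact: (below_parent T_wf ee' pe' e'p).
move=> fe; apply: h_cons => [|e' ee']; rewrite Svf_child // inE //.
exact: (below_trans T_wf fe (child_below T_wf ee')).
Qed.

Lemma claw_assignment (l0 : imT L (Tv p)) : interiorb p ->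
  exists2 k : E -> G, forall f, L (k (val f)) = val l0 f
    & k p = \sum_(c | childb p c) k c.
Proof.
move=> p_int; have [k k_lab k_cons] := subtree_assignment l0.
by exists k => //; apply: k_cons => // [|c pc]; rewrite !inE ?eqxx ?pc ?orbT.
Qed.

Hypothesis L_friendly : friendly L.
Hypothesis p_int : interiorb p.

Lemma relabel_branches (Hf : tedge (Tv p) -> E -> G) (k : E -> G) :
  (forall f, branch_consistent f (Hf f)) ->
  (forall f, L (Hf f (val f)) = L (k (val f))) ->
  k p = \sum_(c | childb p c) k c ->
  exists h, consistentb [ffun e => h e] /\
            forall f e, e \in Svf f -> L (h e) = L (Hf f e).
Proof.
move=> Hf_cons Hf_k k_sum; pose hr := Hf claw_root.
have hr_cons : consistent_outside p hr.
  by have := Hf_cons claw_root; rewrite /branch_consistent eqxx.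
have p_gt0 : (0 < #|childb p|)%N by case/existsP: p_int => c pc; apply/card_gt0P; exists c.
have Lhr : L (hr p) = L (\sum_(c | childb p c) k c) by rewrite -k_sum (Hf_k claw_root).
have [a La sum_a] := friendly_sum L_friendly p_gt0 Lhr.
have child_relabel c : exists Hc, childb p c ->
    [/\ consistent_below c Hc, forall e, belowb c e -> L (Hc e) = L (Hf (branch c) e)
      & Hc c = a c].
  have [pc|] := boolP (childb p c); last by exists hr.
  have cp : val (branch c) != p by rewrite val_branch // (child_neq T_wf pc).
  have := Hf_cons (branch c); rewrite /branch_consistent (negPf cp) val_branch // => cons_c.
  have La_c : L (a c) = L (Hf (branch c) c).
    by have := Hf_k (branch c); rewrite val_branch // => ->; apply: La.
  by have [Hc] := relabel_below L_friendly T_wf cons_c La_c; exists Hc.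
have [HC HCP] := fin_all_exists child_relabel.
exists (graft p (hr p) HC hr); split.
  apply: (consistent_graft T_wf) => // [c /HCP[]//|]; rewrite -sum_a.
  by apply: eq_bigr => c /HCP[].
move=> f e; case: (mem_Tv f) => [fp|pf].
  have -> : f = claw_root by apply: val_inj.
  by rewrite Svf_root // inE => /graft_id_out->.
rewrite Svf_child ?(child_neq T_wf pf) // inE => fe.
have [_ HC_lab _] := HCP _ pf.
by rewrite (graft_child T_wf _ _ _ pf fe) HC_lab // branch_val // (child_neq T_wf pf).
Qed.

Lemma glue_labelings (l0 : imT L (Tv p)) (LL0 : forall f, imT L (Tvf f)) :
  (forall f (x : tedge (Tvf f)), val x = val f -> val (LL0 f) x = val l0 f) ->
  exists Lg : imT L T, forall f (x : tedge (Tvf f)), val Lg (val x) = val (LL0 f) x.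
Proof.
move=> LL0_l0; have [Hf HfP] := fin_all_exists (fun f => branch_assignment (LL0 f)).
have [k k_lab k_sum] := claw_assignment l0 p_int.
have Hf_k f : L (Hf f (val f)) = L (k (val f)).
  have [Hf_lab _] := HfP f.
  by rewrite k_lab (Hf_lab (Sub (val f) (mem_Svf_self f))) LL0_l0.
have [h [cons_h h_lab]] := relabel_branches (fun f => (HfP f).2) Hf_k k_sum.
exists (exist (fun lam => lam \in imL L T) _ (assignment_imL L cons_h)) => f x /=.
by rewrite !ffunE (h_lab f) ?(valP x) // (HfP f).1.
Qed.

End Claw.

Section Ideal.
Variables (G : finZmodType) (Lab : finType) (L : G -> Lab) (T : rtree).

Lemma phiT_qvar (lam : imT L T) : phiT L T (qvar lam) = \prod_e avar e (val lam e).
Proof. by rewrite /phiT /qvar comp_mpolyXU -tnth_nth tnth_mktuple enum_rankK. Qed.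

Lemma phiT_prod_qvar d (nu : 'I_d -> imT L T) :
  phiT L T (\prod_(i < d) qvar (nu i)) = \prod_(i < d) \prod_e avar e (val (nu i) e).
Proof. by rewrite /phiT rmorph_prod; apply: eq_bigr => i _; apply: phiT_qvar. Qed.

Lemma binomial_in_idealTL d (lam mu : 'I_d -> imT L T) :
  (forall e, perm_eq [seq val (lam i) e | i <- enum 'I_d]
                     [seq val (mu i) e | i <- enum 'I_d]) ->
  \prod_(i < d) qvar (lam i) - \prod_(i < d) qvar (mu i) \in idealTL L T.
Proof.
move=> columns_perm; rewrite inE /= /phiT rmorphB /= -!/(phiT L T _) subr_eq0.
rewrite !phiT_prod_qvar exchange_big [X in _ == X]exchange_big /=.
apply/eqP/eq_bigr => e _.
rewrite -!big_enum /= -(big_map (fun i => val (lam i) e) xpredT (avar e)).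
by rewrite -(big_map (fun i => val (mu i) e) xpredT (avar e)); apply: perm_big.
Qed.

End Ideal.

Unset Implicit Arguments.

Theorem lemma4p7 (G : finZmodType) (Lab : finType) (L : G -> Lab)
  (T : rtree) (p : tedge T) (d : nat)
  (l m : 'I_d -> imT L (Tv p))
  (LL MM : 'I_d -> forall f : tedge (Tv p), imT L (Tvf f)) :
  is_rtree T -> friendly L -> interiorb p ->
  (\prod_(i < d) qvar (l i) - \prod_(i < d) qvar (m i)) \in idealTL L (Tv p) ->
  (forall i f (x : tedge (Tvf f)), val x = val f -> val (LL i f) x = val (l i) f) ->
  (forall i f (x : tedge (Tvf f)), val x = val f -> val (MM i f) x = val (m i) f) ->
  (forall f : tedge (Tv p),
     perm_eq [seq val (LL i f) | i <- enum 'I_d] [seq val (MM i f) | i <- enum 'I_d]) ->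
  exists Lg Mg : 'I_d -> imT L T,
    (forall i f (x : tedge (Tvf f)), val (Lg i) (val x) = val (LL i f) x) /\
    (forall i f (x : tedge (Tvf f)), val (Mg i) (val x) = val (MM i f) x) /\
    (\prod_(i < d) qvar (Lg i) - \prod_(i < d) qvar (Mg i)) \in idealTL L T.
Proof.
move=> T_wf L_friendly p_int _ LL_l MM_m LL_MM.
have [Lg Lg_LL] := fin_all_exists (fun i => glue_labelings T_wf L_friendly p_int (LL_l i)).
have [Mg Mg_MM] := fin_all_exists (fun i => glue_labelings T_wf L_friendly p_int (MM_m i)).
exists Lg, Mg; do 2!split=> //; apply: binomial_in_idealTL => e.
have [f Sf_e] := Svf_cover T_wf p e; pose x : tedge (Tvf f) := Sub e Sf_e.
have column_at_x (Ng : 'I_d -> imT L T) (NN : 'I_d -> imT L (Tvf f)) :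
    (forall i, val (Ng i) e = val (NN i) x) ->
    [seq val (Ng i) e | i <- enum 'I_d]
    = [seq lam x | lam : {ffun _ -> Lab} <- [seq val (NN i) | i <- enum 'I_d]].
  by move=> Ng_NN; rewrite -map_comp; apply: eq_map.
rewrite (column_at_x _ (LL^~ f) (fun i => Lg_LL i f x)).
by rewrite (column_at_x _ (MM^~ f) (fun i => Mg_MM i f x)) perm_map.
Qed.
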